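(* Consider a spacecraft moving on a hyperbolic flyby trajectory past the earth under Newtonian gravity plus the small perturbing force (per unit mass) \[ F = 2\omega_\oplus R_\oplus \left[ \frac{2GM_\oplus}{r^2} \cos \delta ~\hat{e}_r + \frac{v^2}{r} \sin \delta ~\hat{e}_\delta \right]. \] Then, to leading order in the perturbation, the differential $\Delta v_\infty$ between the outgoing asymptotic speed $v_1$ and the incoming asymptotic speed $v_0$ satisfies \[ \frac{\Delta v_\infty}{v_\infty} = 2 \omega_\oplus R_\oplus \left( \cos \delta_0 - \cos \delta_1 \right). \]
   Context: Units with $c=1$. Spherical coordinates centered on the earth: radius $r$, declination $\delta$ (measured from the equatorial plane), azimuth $\phi$; $\hat{e}_r$, $\hat{e}_\delta$ are the orthonormal radial and declination unit vectors. $\omega_\oplus$ is the earth's rotational angular velocity, $R_\oplus$ its radius, $M_\oplus$ its mass, $G$ Newton's constant. $v$ denotes the spacecraft's speed and $\mathbf{v}$ its velocity; $v_\infty$ its asymptotic speed. $\delta_0$ and $\delta_1$ are the declinations of the planes (through the spacecraft and the earth's center of mass) containing the incoming resp. outgoing asymptotic velocity vectors. The energy per unit mass $E = \frac{1}{2}v^2 - \frac{GM_\oplus}{r}$ is approximately conserved, and $\Delta v_\infty/v_\infty = \Delta E/(2E)$ with $\Delta E = \int_{-\infty}^{\infty} \mathbf{F}\cdot\mathbf{v}\,dt$. This force law is the paper's derived post-Einsteinian correction (from an inertial frame dragging linear in the earth's rotational velocity) after dropping terms shown not to contribute; the resulting formula is Anderson et al.'s semi-empirical flyby-anomaly prediction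 formula. *)

From Stdlib Require Import Reals.
From Coquelicot Require Import Coquelicot.
Open Scope R_scope.

(* Earth-centred Cartesian coordinates (a,b,c); the z-axis (c) is the
   earth's rotation axis, the equatorial plane is c = 0. *)
Definition norm3 (a b c : R) : R := sqrt (a ^ 2 + b ^ 2 + c ^ 2).

Definition declination (a b c : R) : R := asin (c / norm3 a b c).

(* cos and sin of the azimuth phi; on the polar axis (where phi is undefined)
   we use the convention phi = 0. *)
Definition cos_azimuth (a b : R) : R :=
  let rho := sqrt (a ^ 2 + b ^ 2) in
  if Req_EM_T rho 0 then 1 else a / rho.
Definition sin_azimuth (a b : R) : R :=
  let rho := sqrt (a ^ 2 + b ^ 2) in
  if Req_EM_T rho 0 then 0 else b / rho.

Definition e_r_dot (a b c wa wb wc : R) : R :=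
  let r := norm3 a b c in (a / r) * wa + (b / r) * wb + (c / r) * wc.

Definition e_delta_dot (a b c wa wb wc : R) : R :=
  let d := declination a b c in
  - sin d * cos_azimuth a b * wa - sin d * sin_azimuth a b * wb + cos d * wc.

Definition flyby_force_dot_v (G M omega Re a b c va vb vc : R) : R :=
  let r := norm3 a b c in
  let d := declination a b c in
  let v2 := va ^ 2 + vb ^ 2 + vc ^ 2 in
  2 * omega * Re *
    ((2 * G * M / r ^ 2) * cos d * e_r_dot a b c va vb vc
     + (v2 / r) * sin d * e_delta_dot a b c va vb vc).

From Stdlib Require Import Reals Lra Psatz Classical ClassicalEpsilon.
From Coquelicot Require Import Coquelicot.
Open Scope R_scope.

(* With [rho] the distance to the rotation axis, [cos delta = rho / r], and along a Kepler
   orbit the perturbing power is an exact derivative: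
   [F . v = - 2 omega R (v^2 cos delta)'], because [(v^2)' = - 2 G M r' / r^2] (energy
   conservation) and [e_delta . v = r delta'].  Hence
   [Delta E = - 2 omega R (v_1^2 cos delta_1 - v_0^2 cos delta_0)].  Since [x(t) / t]
   tends to the asymptotic velocity, [r] grows linearly, [G M / r -> 0], so
   [v_0^2 = v_1^2 = 2 E], and [cos delta(x(t))] tends to [cos delta] of the asymptotic
   velocity.  Where the orbit crosses the axis [rho] is not differentiable; there the orbit
   plane contains the axis, [rho] is [+- w / n] for a linear function [w] of the position on
   each side of the crossing, and the local antiderivatives are glued by compactness. *)

Ltac auto_derive_hyps :=
  auto_derive;
  repeat match goal with
  | H : forall s, is_derive ?f s _ |- _ =>
      progress rewrite ?(is_derive_unique (fun s : R => f s) _ _ (H _))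
  | H : is_derive ?f _ _ |- _ => progress rewrite ?(is_derive_unique (fun s : R => f s) _ _ H)
  end;
  repeat split; try assumption; try (eexists; eauto).

Definition cyl_radius (a b : R) : R := norm3 a b 0.

Definition flyby_potential (K a b c va vb vc : R) : R :=
  - K * (va ^ 2 + vb ^ 2 + vc ^ 2) * cos (declination a b c).

Lemma norm3_sq (a b c : R) : norm3 a b c ^ 2 = a ^ 2 + b ^ 2 + c ^ 2.
Proof. unfold norm3; rewrite pow2_sqrt; nra. Qed.

Lemma norm3_pos_sum_sq (a b c : R) : 0 < norm3 a b c -> 0 < a ^ 2 + b ^ 2 + c ^ 2.
Proof. intro Hn; pose proof (norm3_sq a b c); nra. Qed.

Lemma norm3_div (a b c s : R) : s <> 0 -> norm3 (a / s) (b / s) (c / s) = norm3 a b c / Rabs s.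
Proof.
  intro Hs; pose proof (Rabs_pos_lt s Hs).
  unfold norm3; rewrite <- (sqrt_pow2 (Rabs s)) by lra.
  rewrite <- sqrt_div_alt by nra; f_equal.
  rewrite pow2_abs; field; exact Hs.
Qed.

Lemma cyl_radius_sqrt (a b : R) : cyl_radius a b = sqrt (a ^ 2 + b ^ 2).
Proof. unfold cyl_radius, norm3; f_equal; ring. Qed.

Lemma declination_arg_bound (a b c : R) : 0 < norm3 a b c -> -1 <= c / norm3 a b c <= 1.
Proof.
  intro Hn; pose proof (norm3_sq a b c).
  assert (Hc : - norm3 a b c <= c <= norm3 a b c) by nra.
  split; [apply (Rmult_le_reg_r (norm3 a b c)) | apply (Rmult_le_reg_r (norm3 a b c))];
    try field_simplify; lra.
Qed.

Lemma sin_declination (a b c : R) : 0 < norm3 a b c -> sin (declination a b c) = c / norm3 a b c.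
Proof. intro Hn; apply sin_asin, declination_arg_bound, Hn. Qed.

Lemma cos_declination (a b c : R) :
  0 < norm3 a b c -> cos (declination a b c) = cyl_radius a b / norm3 a b c.
Proof.
  intro Hn; unfold declination; rewrite cos_asin by (apply declination_arg_bound, Hn).
  assert (Hrho : 0 <= cyl_radius a b) by apply sqrt_pos.
  rewrite <- (sqrt_pow2 (cyl_radius a b / norm3 a b c)) by (apply Rdiv_le_0_compat; lra).
  f_equal; unfold Rsqr, cyl_radius.
  pose proof (norm3_sq a b c) as Hn2; pose proof (norm3_sq a b 0) as Hrho2.
  field_simplify_eq; [rewrite Hn2, Hrho2; ring | lra].
Qed.

(* The right-hand side is [- 2 omega Re] times the derivative of [v^2 rho / r] by the
   product rule, with [(v^2)' = -2 G M p / r^3], [rho' = (a va + b vb) / rho] and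
   [r' = p / r], where [p = a va + b vb + c vc]. *)
Lemma flyby_force_dot_v_cyl (G M omega Re a b c va vb vc : R) :
  0 < norm3 a b c -> 0 < cyl_radius a b ->
  flyby_force_dot_v G M omega Re a b c va vb vc =
  - (2 * omega * Re) *
    ((-2 * (G * M) * (a * va + b * vb + c * vc) / norm3 a b c ^ 3) * cyl_radius a b / norm3 a b c
     + (va ^ 2 + vb ^ 2 + vc ^ 2) * ((a * va + b * vb) / cyl_radius a b) / norm3 a b c
     - (va ^ 2 + vb ^ 2 + vc ^ 2) * cyl_radius a b
         * ((a * va + b * vb + c * vc) / norm3 a b c) / norm3 a b c ^ 2).
Proof.
  intros Hn Hrho.
  unfold flyby_force_dot_v, e_delta_dot, e_r_dot, cos_azimuth, sin_azimuth.
  rewrite cos_declination, sin_declination, <- cyl_radius_sqrt by exact Hn.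
  destruct (Req_EM_T (cyl_radius a b) 0) as [Hz|_]; [lra|].
  pose proof (norm3_sq a b c) as Hn2; pose proof (norm3_sq a b 0) as Hrho2.
  unfold cyl_radius in *; set (n := norm3 a b c) in *; set (rho := norm3 a b 0) in *.
  field_simplify_eq; [|lra].
  replace (n ^ 3) with (n * (rho ^ 2 + c ^ 2)) by (rewrite Hrho2; nra).
  ring.
Qed.

Lemma is_derive_norm3 (a b c da db dc : R -> R) (t : R) :
  is_derive a t (da t) -> is_derive b t (db t) -> is_derive c t (dc t) ->
  0 < norm3 (a t) (b t) (c t) ->
  is_derive (fun s => norm3 (a s) (b s) (c s)) t
    ((a t * da t + b t * db t + c t * dc t) / norm3 (a t) (b t) (c t)).
Proof.
  intros Ha Hb Hc Hn; pose proof (norm3_pos_sum_sq _ _ _ Hn).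
  unfold norm3 in *; auto_derive_hyps.
  replace (a t * (a t * 1) + b t * (b t * 1) + c t * (c t * 1))
    with (a t ^ 2 + b t ^ 2 + c t ^ 2) by ring.
  field; lra.
Qed.

Lemma eq_of_is_derive_0 (f : R -> R) : (forall t, is_derive f t 0) -> forall s t, f s = f t.
Proof.
  intros Hd s t.
  destruct (MVT_gen f t s (fun _ => 0)) as (c & _ & Hc); [now intros | | lra].
  intros u _; apply continuity_pt_filterlim, (ex_derive_continuous f); eexists; apply Hd.
Qed.

Lemma wronskian_const (a b da db dda ddb : R -> R) :
  (forall t, is_derive a t (da t)) -> (forall t, is_derive b t (db t)) ->
  (forall t, is_derive da t (dda t)) -> (forall t, is_derive db t (ddb t)) ->
  (forall t, a t * ddb t = b t * dda t) ->
  forall s t, a s * db s - b s * da s = a t * db t - b t * da t.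
Proof.
  intros Ha Hb Hda Hdb Hab.
  apply (eq_of_is_derive_0 (fun t => a t * db t - b t * da t)); intro t.
  auto_derive_hyps; rewrite !Rmult_1_l, Hab; ring.
Qed.

Lemma sign_change_of_is_derive_pos (f : R -> R) (t0 l : R) :
  is_derive f t0 l -> 0 < l -> f t0 = 0 ->
  exists d : posreal, forall s, s <> t0 -> Rabs (s - t0) < d -> 0 < f s * (s - t0).
Proof.
  intros Hd Hl Hf0; apply is_derive_Reals in Hd.
  destruct (Hd l Hl) as [d Hquot]; exists d; intros s Hs Hsd.
  specialize (Hquot (s - t0) ltac:(lra) Hsd).
  replace (t0 + (s - t0)) with s in Hquot by ring; rewrite Hf0 in Hquot.
  apply Rabs_lt_between in Hquot.
  replace (f s * (s - t0)) with ((f s - 0) / (s - t0) * (s - t0) ^ 2) by (field; lra).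
  apply Rmult_lt_0_compat; [lra | apply pow2_gt_0; lra].
Qed.

(* [f'] has constant sign by the intermediate value theorem, so [f] decreases at least
   linearly in one time direction. *)
Lemma exists_nonpos_of_deriv_away_from_0 (f df : R -> R) (c : R) :
  (forall t, is_derive f t (df t)) -> (forall t, continuous df t) ->
  0 < c -> (forall t, c ^ 2 <= df t ^ 2) -> exists t, f t <= 0.
Proof.
  intros Hd Hc Hcpos Hbound.
  destruct (Rle_lt_dec (f 0) 0) as [H0|H0]; [now exists 0|].
  set (T := f 0 / c + 1).
  assert (HT : c * T = f 0 + c) by (unfold T; field; lra).
  assert (HTpos : 0 < T) by (unfold T; pose proof (Rdiv_lt_0_compat _ _ H0 Hcpos); lra).
  assert (Hcont : continuity df) by (intro t; apply continuity_pt_filterlim, Hc).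
  assert (Hf : forall t, continuity_pt f t).
  { intro t; apply continuity_pt_filterlim, (ex_derive_continuous f); eexists; apply Hd. }
  destruct (MVT_gen f 0 T df) as (t1 & Ht1 & E1); [intros; apply Hd | intros; apply Hf |].
  destruct (MVT_gen f (- T) 0 df) as (t2 & Ht2 & E2); [intros; apply Hd | intros; apply Hf |].
  rewrite Rmin_left, Rmax_right in Ht1, Ht2 by lra.
  destruct (Rle_lt_dec (f T) 0) as [HT1|HT1]; [now exists T|].
  destruct (Rle_lt_dec (f (- T)) 0) as [HT2|HT2]; [now exists (- T)|].
  exfalso.
  assert (Habs : forall t, c <= Rabs (df t)).
  { intro t; rewrite <- (Rabs_pos_eq c) by lra.
    apply Rsqr_le_abs_0; unfold Rsqr; pose proof (Hbound t); nra. }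
  assert (Hd1 : 0 < df t1).
  { destruct (Rlt_le_dec 0 (df t1)) as [|Hneg]; [easy|].
    pose proof (Habs t1); rewrite Rabs_left1 in * by easy.
    assert (df t1 * T <= - c * T) by (apply Rmult_le_compat_r; lra); lra. }
  assert (Hd2 : df t2 < 0).
  { destruct (Rlt_le_dec (df t2) 0) as [|Hpos]; [easy|].
    pose proof (Habs t2); rewrite Rabs_pos_eq in * by easy.
    assert (c * T <= df t2 * T) by (apply Rmult_le_compat_r; lra); lra. }
  assert (Ht : t2 < t1) by (destruct (Req_dec t1 t2); subst; lra).
  destruct (IVT df t2 t1 Hcont Ht Hd2 Hd1) as (t & _ & Hzero).
  pose proof (Habs t); rewrite Hzero, Rabs_R0 in *; lra.
Qed.

Lemma Rabs_lt_of_between (u v s t0 d : R) :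
  Rmin u v <= s <= Rmax u v -> Rabs (u - t0) < d -> Rabs (v - t0) < d -> Rabs (s - t0) < d.
Proof.
  intros Hs Hu Hv; apply Rabs_lt_between in Hu, Hv; apply Rabs_lt_between.
  unfold Rmin, Rmax in Hs; destruct (Rle_dec u v); lra.
Qed.

(* A Lebesgue number of the local radii on [a, b] lets one walk from [a] to [b] in steps
   along which [Q] holds. *)
Lemma transitive_rel_from_local (Q : R -> R -> Prop) :
  (forall u v w, Q u v -> Q v w -> Q u w) ->
  (forall t, exists d : posreal, forall u v, Rabs (u - t) < d -> Rabs (v - t) < d -> Q u v) ->
  forall a b, a <= b -> Q a b.
Proof.
  intros Htrans Hloc a b Hab.
  set (delta t := pos_div_2 (proj1_sig (constructive_indefinite_description _ (Hloc t)))).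
  assert (Hdelta : forall t u v,
             Rabs (u - t) < 2 * delta t -> Rabs (v - t) < 2 * delta t -> Q u v).
  { intros t u v; unfold delta.
    destruct (constructive_indefinite_description _ (Hloc t)) as [d Hd]; simpl.
    intros; apply Hd; lra. }
  destruct (compactness_value_1d a b delta) as [d Hd].
  assert (Hstep : forall u v, a <= u <= b -> Rabs (v - u) < d -> Q u v).
  { intros u v Hu Hv; apply NNPP; intro HnQ.
    apply (Hd u Hu); intros (t & _ & Hut & Hdt); apply HnQ, (Hdelta t).
    - pose proof (cond_pos (delta t)); lra.
    - apply Rabs_lt_between in Hut, Hv; apply Rabs_lt_between; lra. }
  pose proof (cond_pos d) as Hdpos.
  destruct (INR_unbounded ((b - a) / d)) as [n Hn].
  assert (Hnpos : 0 < INR n) by (pose proof (Rdiv_le_0_compat (b - a) d); lra).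
  set (h := (b - a) / INR n).
  assert (Hh : 0 <= h < d).
  { unfold h; split; [apply Rdiv_le_0_compat; lra|].
    apply (Rmult_lt_reg_r (INR n)); [lra|].
    apply (Rmult_lt_compat_r d) in Hn; [|lra].
    field_simplify; field_simplify in Hn; lra. }
  assert (Hwalk : forall k, (k <= n)%nat -> Q a (a + INR k * h)).
  { induction k as [|k IH]; intro Hk.
    - rewrite Rmult_0_l, Rplus_0_r.
      apply Hstep; [lra | rewrite Rminus_eq_0, Rabs_R0; lra].
    - apply (Htrans _ (a + INR k * h)); [apply IH; lia|].
      assert (HkN : INR k * h <= INR n * h).
      { apply Rmult_le_compat_r; [lra | apply le_INR; lia]. }
      assert (HnN : INR n * h = b - a) by (unfold h; field; lra).
      pose proof (pos_INR k).
      apply Hstep; [nra|].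
      rewrite S_INR; replace (a + (INR k + 1) * h - (a + INR k * h)) with h by ring.
      rewrite Rabs_pos_eq; lra. }
  replace b with (a + INR n * h) by (unfold h; field; lra).
  apply Hwalk; lia.
Qed.

Lemma is_RInt_of_local_antiderivative (f g : R -> R) :
  (forall t, exists d : posreal, forall u v,
      Rabs (u - t) < d -> Rabs (v - t) < d -> is_RInt f u v (g v - g u)) ->
  forall a b, is_RInt f a b (g b - g a).
Proof.
  intros Hloc.
  assert (Hle : forall a b, a <= b -> is_RInt f a b (g b - g a)).
  { apply (transitive_rel_from_local (fun a b => is_RInt f a b (g b - g a))); [|exact Hloc].
    intros u v w Huv Hvw.
    replace (g w - g u) with (plus (g v - g u) (g w - g v)) by (unfold plus; simpl; ring).
    exact (is_RInt_Chasles _ _ _ _ _ _ Huv Hvw). }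
  intros a b; destruct (Rle_lt_dec a b) as [Hab|Hba]; [now apply Hle|].
  replace (g b - g a) with (opp (g a - g b)) by (unfold opp; simpl; ring).
  apply (is_RInt_swap f), Hle; lra.
Qed.

Lemma is_RInt_gen_of_antiderivative {Fa Fb : (R -> Prop) -> Prop}
  {FFa : Filter Fa} {FFb : Filter Fb} (f g : R -> R) (la lb : R) :
  (forall a b, is_RInt f a b (g b - g a)) ->
  filterlim g Fa (locally la) -> filterlim g Fb (locally lb) ->
  is_RInt_gen f Fa Fb (lb - la).
Proof.
  intros Hfg Ha Hb.
  apply (filterlimi_lim_ext (fun ab => g (snd ab) - g (fst ab))); [intros [a b]; apply Hfg|].
  apply (filterlim_comp_2 (G := locally lb) (H := locally (opp la))
           (fun ab => g (snd ab)) (fun ab => opp (g (fst ab))) plus).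
  - exact (filterlim_comp _ _ _ snd g _ _ _ filterlim_snd Hb).
  - apply (filterlim_comp _ _ _ fst (fun s => opp (g s)) _ _ _ filterlim_fst).
    exact (filterlim_comp _ _ _ g opp _ _ _ Ha (filterlim_opp la)).
  - exact (filterlim_plus (V := R_NormedModule) lb (opp la)).
Qed.

Lemma is_lim_mult' (f g : R -> R) (tinf : Rbar) (a b : R) :
  is_lim f tinf a -> is_lim g tinf b -> is_lim (fun t => f t * g t) tinf (a * b).
Proof. intros Hf Hg; exact (is_lim_mult f g tinf a b Hf Hg I). Qed.

Lemma is_lim_sum_sq (f g h : R -> R) (tinf : Rbar) (a b c : R) :
  is_lim f tinf a -> is_lim g tinf b -> is_lim h tinf c ->
  is_lim (fun t => f t ^ 2 + g t ^ 2 + h t ^ 2) tinf (a ^ 2 + b ^ 2 + c ^ 2).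
Proof.
  intros Hf Hg Hh.
  apply (is_lim_ext (fun t => f t * f t + g t * g t + h t * h t)); [intro; ring|].
  replace (a ^ 2 + b ^ 2 + c ^ 2) with (a * a + b * b + c * c) by ring.
  apply is_lim_plus'; [apply is_lim_plus'|]; now apply is_lim_mult'.
Qed.

Lemma is_lim_norm3 (f g h : R -> R) (tinf : Rbar) (a b c : R) :
  is_lim f tinf a -> is_lim g tinf b -> is_lim h tinf c ->
  is_lim (fun t => norm3 (f t) (g t) (h t)) tinf (norm3 a b c).
Proof.
  intros Hf Hg Hh; unfold norm3.
  apply is_lim_comp_continuous; [now apply is_lim_sum_sq | apply continuous_sqrt].
Qed.

Lemma is_lim_div_id_p (f df : R -> R) (l : R) :
  (forall t, is_derive f t (df t)) -> is_lim df p_infty l ->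
  is_lim (fun t => f t / t) p_infty l.
Proof.
  intros Hd Hl; apply is_lim_spec; apply is_lim_spec in Hl; intro eps.
  pose proof (cond_pos eps) as Heps.
  destruct (Hl (pos_div_2 eps)) as [T0 HT0]; simpl in HT0.
  set (T := Rmax T0 0 + 1).
  assert (HT : T0 < T /\ 0 < T)
    by (pose proof (Rmax_l T0 0); pose proof (Rmax_r T0 0); unfold T; lra).
  set (A := Rabs (f T - l * T)).
  exists (Rmax T (2 * A / eps)); intros t Ht.
  assert (Ht' : T < t /\ 2 * A < eps * t).
  { pose proof (Rmax_l T (2 * A / eps)); pose proof (Rmax_r T (2 * A / eps)); split; [lra|].
    apply (Rmult_lt_reg_r (/ eps)); [now apply Rinv_0_lt_compat|].
    field_simplify; lra. }
  destruct (MVT_gen f T t df) as (c & Hc & Ec);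
    [intros; apply Hd | intros; apply continuity_pt_filterlim, (ex_derive_continuous f);
                        eexists; apply Hd |].
  rewrite Rmin_left, Rmax_right in Hc by lra.
  assert (Hdc : Rabs (df c - l) * (t - T) <= eps / 2 * t).
  { assert (Rabs (df c - l) < eps / 2) by (apply HT0; lra).
    pose proof (Rabs_pos (df c - l)); nra. }
  assert (Hnum : Rabs (f t - l * t) < eps * t).
  { replace (f t - l * t) with ((f T - l * T) + (df c - l) * (t - T))
      by (replace (f t) with (f T + df c * (t - T)) by lra; ring).
    eapply Rle_lt_trans; [apply Rabs_triang|].
    rewrite Rabs_mult, (Rabs_pos_eq (t - T)) by lra; fold A; lra. }
  replace (f t / t - l) with ((f t - l * t) / t) by (field; lra).
  unfold Rdiv; rewrite Rabs_mult, Rabs_inv, (Rabs_pos_eq t) by lra.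
  apply (Rmult_lt_reg_r t); [lra|]; field_simplify; lra.
Qed.

Lemma is_lim_div_id (f df : R -> R) (tinf : Rbar) (l : R) :
  tinf = p_infty \/ tinf = m_infty ->
  (forall t, is_derive f t (df t)) -> is_lim df tinf l ->
  is_lim (fun t => f t / t) tinf l.
Proof.
  intros [-> | ->] Hd Hl; [now apply (is_lim_div_id_p f df)|].
  assert (Hopp_p : is_lim (fun s => - s) p_infty m_infty)
    by exact (is_lim_opp _ _ _ (is_lim_id p_infty)).
  assert (Hopp_m : is_lim (fun s => - s) m_infty p_infty)
    by exact (is_lim_opp _ _ _ (is_lim_id m_infty)).
  assert (Hrefl : is_lim (fun s => f (- s) / s) p_infty (- l)).
  { apply (is_lim_div_id_p _ (fun s => - df (- s))); [intro s; auto_derive_hyps; ring|].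
    apply (is_lim_opp (fun s => df (- s)) p_infty l).
    apply (is_lim_comp df (fun s => - s) p_infty l m_infty Hl Hopp_p).
    now apply filter_forall. }
  apply (is_lim_ext (fun t => - (f (- - t) / - t))).
  { intro t; rewrite Ropp_involutive; unfold Rdiv; rewrite Rinv_opp; ring. }
  replace (Finite l) with (Rbar_opp (- l)) by (simpl; f_equal; ring).
  apply is_lim_opp, (is_lim_comp _ (fun t => - t) m_infty (- l) p_infty Hrefl Hopp_m).
  now apply filter_forall.
Qed.

Lemma is_lim_inv_abs (tinf : Rbar) :
  tinf = p_infty \/ tinf = m_infty -> is_lim (fun t => / Rabs t) tinf 0.
Proof.
  intros [-> | ->]; apply (is_lim_inv (fun t => Rabs t) _ p_infty); try discriminate;
    exact (is_lim_Rabs _ _ _ (is_lim_id _)).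
Qed.

Lemma Rbar_locally_infty_neq0 (tinf : Rbar) :
  tinf = p_infty \/ tinf = m_infty -> Rbar_locally' tinf (fun t => t <> 0).
Proof. intros [-> | ->]; exists 0; intros; lra. Qed.

Lemma cyl_radius_planar (a b al be : R) :
  0 < al ^ 2 + be ^ 2 -> al * b - be * a = 0 ->
  cyl_radius a b = Rabs (al * a + be * b) / sqrt (al ^ 2 + be ^ 2).
Proof.
  intros Hn Hplane.
  rewrite cyl_radius_sqrt, <- sqrt_Rsqr_abs, <- sqrt_div_alt by lra; f_equal.
  unfold Rsqr; field_simplify_eq; nra.
Qed.

Set Implicit Arguments.
Record kepler_orbit (mu : R) (x y z vx vy vz : R -> R) : Prop := {
  orbit_r_pos : forall t, 0 < norm3 (x t) (y t) (z t);
  orbit_dx : forall t, is_derive x t (vx t);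
  orbit_dy : forall t, is_derive y t (vy t);
  orbit_dz : forall t, is_derive z t (vz t);
  orbit_dvx : forall t, is_derive vx t (- mu * x t / norm3 (x t) (y t) (z t) ^ 3);
  orbit_dvy : forall t, is_derive vy t (- mu * y t / norm3 (x t) (y t) (z t) ^ 3);
  orbit_dvz : forall t, is_derive vz t (- mu * z t / norm3 (x t) (y t) (z t) ^ 3)
}.
Unset Implicit Arguments.

Section Flyby.

Variables (G M omega Re : R) (x y z vx vy vz : R -> R).
Hypothesis orbit : kepler_orbit (G * M) x y z vx vy vz.

Let r t := norm3 (x t) (y t) (z t).
Let rho t := cyl_radius (x t) (y t).
Let v2 t := vx t ^ 2 + vy t ^ 2 + vz t ^ 2.
Let p t := x t * vx t + y t * vy t + z t * vz t.
Let q t := x t * vx t + y t * vy t.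
Let energy t := v2 t / 2 - G * M / r t.
Let K := 2 * omega * Re.
Let force t := flyby_force_dot_v G M omega Re (x t) (y t) (z t) (vx t) (vy t) (vz t).
Let potential t := flyby_potential K (x t) (y t) (z t) (vx t) (vy t) (vz t).

Lemma r_pos t : 0 < r t.
Proof. exact (orbit_r_pos orbit t). Qed.

Lemma is_derive_r t : is_derive r t (p t / r t).
Proof.
  destruct orbit as [Hr Hx Hy Hz _ _ _].
  exact (is_derive_norm3 x y z vx vy vz t (Hx t) (Hy t) (Hz t) (Hr t)).
Qed.

Lemma is_derive_rho t : 0 < rho t -> is_derive rho t (q t / rho t).
Proof.
  destruct orbit as [_ Hx Hy _ _ _ _]; intro Hrho.
  assert (Hd := is_derive_norm3 x y (fun _ => 0) vx vy (fun _ => 0) t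
                  (Hx t) (Hy t) (is_derive_const 0 t) Hrho).
  unfold rho, q, cyl_radius.
  replace (x t * vx t + y t * vy t) with (x t * vx t + y t * vy t + 0 * 0) by ring; exact Hd.
Qed.

Lemma is_derive_v2 t : is_derive v2 t (-2 * (G * M) * p t / r t ^ 3).
Proof.
  pose proof (r_pos t); destruct orbit as [_ _ _ _ Hvx Hvy Hvz].
  unfold v2, p, r in *; auto_derive_hyps; field; lra.
Qed.

Lemma ex_derive_p t : ex_derive p t.
Proof. destruct orbit as [_ Hx Hy Hz Hvx Hvy Hvz]; unfold p; auto_derive_hyps. Qed.

Lemma energy_const t : energy t = energy 0.
Proof.
  apply (eq_of_is_derive_0 energy); intro s.
  pose proof (r_pos s); pose proof (is_derive_v2 s); pose proof (is_derive_r s).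
  unfold energy; auto_derive_hyps; [lra | field; lra].
Qed.

Let Lx t := y t * vz t - z t * vy t.
Let Ly t := z t * vx t - x t * vz t.
Let Lz t := x t * vy t - y t * vx t.

Lemma angular_momentum_const s t : Lx s = Lx t /\ Ly s = Ly t /\ Lz s = Lz t.
Proof.
  destruct orbit as [_ Hx Hy Hz Hvx Hvy Hvz].
  split; [|split].
  - apply (wronskian_const y z vy vz _ _ Hy Hz Hvy Hvz); intro; unfold Rdiv; ring.
  - apply (wronskian_const z x vz vx _ _ Hz Hx Hvz Hvx); intro; unfold Rdiv; ring.
  - apply (wronskian_const x y vx vy _ _ Hx Hy Hvx Hvy); intro; unfold Rdiv; ring.
Qed.

Hypothesis GM_pos : 0 < G * M.
Hypothesis hyperbolic : 0 < energy 0.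

Lemma v2_gt_2energy t : 2 * energy 0 < v2 t.
Proof.
  rewrite <- (energy_const t); unfold energy.
  pose proof (Rdiv_lt_0_compat _ _ GM_pos (r_pos t)); lra.
Qed.

(* With zero angular momentum, [r'^2 = v^2 > 2 E] by Lagrange's identity
   [p^2 + |L|^2 = r^2 v^2], so [r] would reach 0 in finite time. *)
Lemma orbit_not_radial t0 : x t0 = 0 -> y t0 = 0 -> 0 < vx t0 ^ 2 + vy t0 ^ 2.
Proof.
  intros Hx0 Hy0; apply Rnot_le_lt; intro Hv0.
  assert (Hv0' : vx t0 = 0 /\ vy t0 = 0) by nra.
  assert (HL : forall t, Lx t = 0 /\ Ly t = 0 /\ Lz t = 0).
  { intro t; destruct (angular_momentum_const t t0) as (-> & -> & ->).
    unfold Lx, Ly, Lz; rewrite Hx0, Hy0, (proj1 Hv0'), (proj2 Hv0'); lra. }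
  destruct (exists_nonpos_of_deriv_away_from_0 r (fun t => p t / r t) (sqrt (2 * energy 0)))
    as [t Ht].
  - exact is_derive_r.
  - intro t; apply (ex_derive_continuous (fun t => p t / r t)).
    pose proof (r_pos t); pose proof (ex_derive_p t); pose proof (is_derive_r t).
    auto_derive_hyps; lra.
  - apply sqrt_lt_R0; lra.
  - intro t; rewrite pow2_sqrt by lra.
    pose proof (r_pos t); pose proof (v2_gt_2energy t); pose proof (norm3_sq (x t) (y t) (z t)).
    destruct (HL t) as (HLx & HLy & HLz).
    assert (Hlagrange : p t ^ 2 + Lx t ^ 2 + Ly t ^ 2 + Lz t ^ 2 = r t ^ 2 * v2 t).
    { unfold p, Lx, Ly, Lz, v2, r; rewrite norm3_sq; ring. }
    replace ((p t / r t) ^ 2) with (v2 t); [lra|].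
    rewrite HLx, HLy, HLz in Hlagrange; field_simplify_eq; lra.
  - pose proof (r_pos t); lra.
Qed.

(* [r . L = 0], with [L] constant, equal to [z(t0) (- vy(t0), vx(t0), 0)]. *)
Lemma orbit_planar_of_axis t0 : x t0 = 0 -> y t0 = 0 ->
  forall t, vx t0 * y t - vy t0 * x t = 0.
Proof.
  intros Hx0 Hy0 t.
  assert (Hz0 : z t0 <> 0).
  { intro Hz0; pose proof (norm3_pos_sum_sq _ _ _ (r_pos t0)); rewrite Hx0, Hy0, Hz0 in *; lra. }
  destruct (angular_momentum_const t t0) as (HLx & HLy & HLz).
  assert (Hperp : x t * Lx t + y t * Ly t + z t * Lz t = 0) by (unfold Lx, Ly, Lz; ring).
  rewrite HLx, HLy, HLz in Hperp; unfold Lx, Ly, Lz in Hperp; rewrite Hx0, Hy0 in Hperp.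
  apply (Rmult_eq_reg_l (z t0)); [lra | exact Hz0].
Qed.

Let dpotential_along (h dh : R -> R) t :=
  - K * ((-2 * (G * M) * p t / r t ^ 3) * h t / r t + v2 t * dh t / r t
         - v2 t * h t * (p t / r t) / r t ^ 2).

Lemma is_derive_potential_along h dh t :
  is_derive h t (dh t) -> is_derive (fun s => - K * v2 s * h s / r s) t (dpotential_along h dh t).
Proof.
  intro Hh; pose proof (r_pos t); pose proof (is_derive_v2 t); pose proof (is_derive_r t).
  unfold dpotential_along; auto_derive_hyps; [lra | field; lra].
Qed.

Lemma potential_cyl t : potential t = - K * v2 t * rho t / r t.
Proof.
  pose proof (r_pos t).
  unfold potential, flyby_potential; rewrite cos_declination by assumption.
  unfold v2, rho, r in *; field; lra.
Qed.

Lemma force_eq_dpotential t : 0 < rho t -> force t = dpotential_along rho (fun s => q s / rho s) t.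
Proof. exact (flyby_force_dot_v_cyl G M omega Re _ _ _ _ _ _ (r_pos t)). Qed.

(* [rho] is not differentiable where the orbit crosses the rotation axis; [h] is a smooth
   stand-in for it, and [rho] may vanish only at the end points. *)
Lemma is_RInt_force_piece h dh u v :
  (forall s, Rmin u v <= s <= Rmax u v -> is_derive h s (dh s) /\ ex_derive dh s) ->
  (forall s, Rmin u v <= s <= Rmax u v -> h s = rho s) ->
  (forall s, Rmin u v < s < Rmax u v -> 0 < rho s) ->
  is_RInt force u v (potential v - potential u).
Proof.
  intros Hd Hh Hpos.
  assert (Hu : Rmin u v <= u <= Rmax u v) by (split; [apply Rmin_l | apply Rmax_l]).
  assert (Hv : Rmin u v <= v <= Rmax u v) by (split; [apply Rmin_r | apply Rmax_r]).
  rewrite !potential_cyl, <- (Hh u Hu), <- (Hh v Hv).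
  apply (is_RInt_ext (dpotential_along h dh)).
  - intros s Hs; rewrite force_eq_dpotential by (now apply Hpos).
    assert (Hloc : locally s (fun t => h t = rho t)).
    { apply (locally_interval _ s (Rmin u v) (Rmax u v)); try easy.
      intros t Ht1 Ht2; apply Hh; simpl in *; lra. }
    assert (Hdrho : is_derive rho s (dh s)).
    { apply (is_derive_ext_loc h); [exact Hloc | apply Hd; lra]. }
    assert (Hdh : dh s = q s / rho s).
    { rewrite <- (is_derive_unique _ _ _ Hdrho).
      exact (is_derive_unique _ _ _ (is_derive_rho s (Hpos s Hs))). }
    unfold dpotential_along; rewrite Hdh, (Hh s); [reflexivity | lra].
  - apply (is_RInt_derive (fun s => - K * v2 s * h s / r s)).
    + intros s Hs; apply is_derive_potential_along, Hd, Hs.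
    + intros s Hs; apply (ex_derive_continuous (dpotential_along h dh)).
      destruct (Hd s Hs) as [Hhs Hdhs].
      pose proof (r_pos s); pose proof (ex_derive_p s); pose proof (is_derive_v2 s);
        pose proof (is_derive_r s).
      unfold dpotential_along; auto_derive_hyps;
        apply Rgt_not_eq; repeat apply Rmult_lt_0_compat; lra.
Qed.

Lemma force_local_antiderivative_off_axis t0 : 0 < rho t0 ->
  exists d : posreal, forall u v, Rabs (u - t0) < d -> Rabs (v - t0) < d ->
    is_RInt force u v (potential v - potential u).
Proof.
  intro Hrho.
  assert (Hcont : continuous rho t0).
  { apply (ex_derive_continuous rho); eexists; apply is_derive_rho, Hrho. }
  destruct (Hcont _ (open_gt 0 _ Hrho)) as [d Hd].
  exists d; intros u v Hu Hv.
  assert (Hball : forall s, Rmin u v <= s <= Rmax u v -> 0 < rho s).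
  { intros s Hs; apply Hd; exact (Rabs_lt_of_between u v s t0 d Hs Hu Hv). }
  apply (is_RInt_force_piece rho (fun s => q s / rho s)); [| easy | intros; apply Hball; lra].
  intros s Hs; pose proof (Hball s Hs); pose proof (is_derive_rho s (Hball s Hs)).
  split; [easy|].
  destruct orbit as [_ Hx Hy _ Hvx Hvy _]; unfold q; auto_derive_hyps; lra.
Qed.

(* On the axis the orbit plane contains the axis, so [rho = |w| / n] for a linear [w]
   with [w(t0) = 0 < w'(t0)]; on each side of [t0], [rho] is the smooth [+- w / n]. *)
Lemma force_local_antiderivative_on_axis t0 : rho t0 = 0 ->
  exists d : posreal, forall u v, Rabs (u - t0) < d -> Rabs (v - t0) < d ->
    is_RInt force u v (potential v - potential u).
Proof.
  intro Hrho0.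
  assert (Hxy : x t0 = 0 /\ y t0 = 0).
  { pose proof (norm3_sq (x t0) (y t0) 0) as Hsq.
    unfold rho, cyl_radius in Hrho0; rewrite Hrho0 in Hsq; split; nra. }
  destruct Hxy as [Hx0 Hy0].
  pose proof (orbit_not_radial t0 Hx0 Hy0) as Hn2.
  set (al := vx t0) in *; set (be := vy t0) in *; set (n := sqrt (al ^ 2 + be ^ 2)).
  assert (Hn : 0 < n) by (apply sqrt_lt_R0; lra).
  set (w s := al * x s + be * y s); set (dw s := al * vx s + be * vy s).
  assert (Hdw : forall s, is_derive w s (dw s)).
  { destruct orbit as [_ Hx Hy _ _ _ _]; intro s; unfold w, dw; auto_derive_hyps; ring. }
  assert (Hrho : forall s, rho s = Rabs (w s) / n).
  { intro s; apply cyl_radius_planar; [easy | apply (orbit_planar_of_axis t0 Hx0 Hy0)]. }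
  assert (Hw0 : w t0 = 0) by (unfold w; rewrite Hx0, Hy0; ring).
  destruct (sign_change_of_is_derive_pos w t0 (dw t0) (Hdw t0)) as [d Hsign];
    [unfold dw; fold al be; lra | exact Hw0 |].
  exists d.
  assert (Hside : forall u, Rabs (u - t0) < d -> is_RInt force u t0 (potential t0 - potential u)).
  { intros u Hu.
    set (sg := if Rle_dec u t0 then -1 else 1).
    assert (Hsg : forall s, Rmin u t0 <= s <= Rmax u t0 -> s <> t0 -> 0 < sg * w s).
    { intros s Hs Hst.
      assert (Hs0 : Rabs (s - t0) < d).
      { apply (Rabs_lt_of_between u t0); [easy | easy |].
        rewrite Rminus_eq_0, Rabs_R0; apply cond_pos. }
      pose proof (Hsign s Hst Hs0).
      unfold sg, Rmin, Rmax in *; destruct (Rle_dec u t0); nra. }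
    assert (Hrho_sg : forall s, Rmin u t0 <= s <= Rmax u t0 -> rho s = sg * w s / n).
    { intros s Hs; rewrite Hrho; f_equal.
      destruct (Req_dec s t0) as [->|Hst]; [rewrite Hw0, Rabs_R0; ring|].
      pose proof (Hsg s Hs Hst).
      unfold sg in *; destruct (Rle_dec u t0);
        [rewrite Rabs_left by lra | rewrite Rabs_pos_eq by lra]; ring. }
    apply (is_RInt_force_piece (fun s => sg * w s / n) (fun s => sg * dw s / n)).
    - intros s _; split; [auto_derive_hyps; field; lra|].
      destruct orbit as [_ _ _ _ Hvx Hvy _]; unfold dw; auto_derive_hyps.
    - intros s Hs; symmetry; now apply Hrho_sg.
    - intros s Hs; rewrite Hrho_sg by lra; apply Rdiv_lt_0_compat; [|easy].
      apply Hsg; [lra|]; unfold Rmin, Rmax in Hs; destruct Rle_dec; lra. }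
  intros u v Hu Hv.
  replace (potential v - potential u)
    with (plus (potential t0 - potential u) (opp (potential t0 - potential v)))
    by (unfold plus, opp; simpl; ring).
  apply (is_RInt_Chasles force u t0 v); [now apply Hside | apply (is_RInt_swap force), Hside, Hv].
Qed.

Lemma is_RInt_force a b : is_RInt force a b (potential b - potential a).
Proof.
  apply is_RInt_of_local_antiderivative; intro t0.
  destruct (Rle_lt_or_eq_dec 0 (rho t0) (sqrt_pos _)) as [Hpos | Hzero].
  - now apply force_local_antiderivative_off_axis.
  - now apply force_local_antiderivative_on_axis.
Qed.

Section Asymptotics.

Variables (tinf : Rbar) (ax ay az : R).
Hypothesis tinf_infinite : tinf = p_infty \/ tinf = m_infty.
Hypotheses (lim_vx : is_lim vx tinf ax) (lim_vy : is_lim vy tinf ay) (lim_vz : is_lim vz tinf az).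

Lemma is_lim_v2 : is_lim v2 tinf (ax ^ 2 + ay ^ 2 + az ^ 2).
Proof. now apply is_lim_sum_sq. Qed.

Lemma is_lim_position_div_t :
  is_lim (fun t => x t / t) tinf ax /\ is_lim (fun t => y t / t) tinf ay /\
  is_lim (fun t => z t / t) tinf az.
Proof.
  destruct orbit as [_ Hx Hy Hz _ _ _].
  repeat split;
    [apply (is_lim_div_id x vx) | apply (is_lim_div_id y vy) | apply (is_lim_div_id z vz)];
    assumption.
Qed.

Lemma asymptotic_speed_pos : 0 < norm3 ax ay az.
Proof.
  assert (Hle : Rbar_le (2 * energy 0) (ax ^ 2 + ay ^ 2 + az ^ 2)).
  { apply (is_lim_le_loc (fun _ => 2 * energy 0) v2 tinf); [| apply is_lim_const | exact is_lim_v2].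
    apply filter_forall; intro t; pose proof (v2_gt_2energy t); lra. }
  simpl in Hle; apply sqrt_lt_R0; lra.
Qed.

(* [r / |t| = |x(t) / t| -> |v_oo| > 0], so [1 / r -> 0]. *)
Lemma is_lim_inv_r : is_lim (fun t => / r t) tinf 0.
Proof.
  pose proof asymptotic_speed_pos as Hn.
  destruct is_lim_position_div_t as (Hx & Hy & Hz).
  apply (is_lim_ext_loc (fun t => / Rabs t * / norm3 (x t / t) (y t / t) (z t / t))).
  - apply (filter_imp (fun t => t <> 0)); [|now apply Rbar_locally_infty_neq0].
    intros t Ht; pose proof (r_pos t); pose proof (Rabs_pos_lt t Ht).
    rewrite norm3_div by exact Ht; unfold r in *; field; lra.
  - rewrite <- (Rmult_0_l (/ norm3 ax ay az)).
    apply is_lim_mult'; [now apply is_lim_inv_abs|].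
    apply (is_lim_inv (fun t => norm3 (x t / t) (y t / t) (z t / t)) tinf (norm3 ax ay az)).
    + now apply is_lim_norm3.
    + intro Heq; injection Heq; lra.
Qed.

Lemma asymptotic_speed2 : ax ^ 2 + ay ^ 2 + az ^ 2 = 2 * energy 0.
Proof.
  assert (Hv2 : is_lim v2 tinf (2 * energy 0 + 2 * (G * M) * 0)).
  { apply (is_lim_ext (fun t => 2 * energy 0 + 2 * (G * M) * / r t)).
    - intro t; rewrite <- (energy_const t); unfold energy; pose proof (r_pos t); field; lra.
    - apply is_lim_plus'; [apply is_lim_const|].
      apply is_lim_mult'; [apply is_lim_const | exact is_lim_inv_r]. }
  apply is_lim_unique in Hv2; rewrite (is_lim_unique _ _ _ is_lim_v2) in Hv2.
  injection Hv2; lra.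
Qed.

Lemma is_lim_potential : is_lim potential tinf (flyby_potential K ax ay az ax ay az).
Proof.
  pose proof asymptotic_speed_pos as Hn.
  destruct is_lim_position_div_t as (Hx & Hy & Hz).
  unfold flyby_potential; rewrite cos_declination by exact Hn.
  apply (is_lim_ext_loc (fun t => - K * v2 t
            * (norm3 (x t / t) (y t / t) (0 / t) / norm3 (x t / t) (y t / t) (z t / t)))).
  - apply (filter_imp (fun t => t <> 0)); [|now apply Rbar_locally_infty_neq0].
    intros t Ht; pose proof (r_pos t); pose proof (Rabs_pos_lt t Ht).
    rewrite potential_cyl, !norm3_div by exact Ht; unfold rho, cyl_radius, r in *; field; lra.
  - apply is_lim_mult'; [apply is_lim_mult'; [apply is_lim_const | exact is_lim_v2]|].
    apply (is_lim_div _ _ tinf (norm3 ax ay 0) (norm3 ax ay az));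
      [| | intro Heq; injection Heq; lra | exact I].
    + apply is_lim_norm3; try easy.
      apply (is_lim_ext (fun _ => 0)); [intro; unfold Rdiv; ring | apply is_lim_const].
    + now apply is_lim_norm3.
Qed.

End Asymptotics.

Lemma is_RInt_gen_force (v0x v0y v0z v1x v1y v1z : R) :
  is_lim vx m_infty v0x -> is_lim vy m_infty v0y -> is_lim vz m_infty v0z ->
  is_lim vx p_infty v1x -> is_lim vy p_infty v1y -> is_lim vz p_infty v1z ->
  is_RInt_gen force (Rbar_locally m_infty) (Rbar_locally p_infty)
    (- K * (2 * energy 0) * (cos (declination v1x v1y v1z) - cos (declination v0x v0y v0z))).
Proof.
  intros L0x L0y L0z L1x L1y L1z.
  pose proof (or_intror eq_refl : m_infty = p_infty \/ m_infty = m_infty) as Hm.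
  pose proof (or_introl eq_refl : p_infty = p_infty \/ p_infty = m_infty) as Hp.
  replace (- K * (2 * energy 0) * _)
    with (flyby_potential K v1x v1y v1z v1x v1y v1z - flyby_potential K v0x v0y v0z v0x v0y v0z)
    by (unfold flyby_potential; rewrite (asymptotic_speed2 _ _ _ _ Hm L0x L0y L0z),
          (asymptotic_speed2 _ _ _ _ Hp L1x L1y L1z); ring).
  apply (is_RInt_gen_of_antiderivative force potential); [exact is_RInt_force | |].
  - exact (is_lim_potential m_infty _ _ _ Hm L0x L0y L0z).
  - exact (is_lim_potential p_infty _ _ _ Hp L1x L1y L1z).
Qed.

End Flyby.

Theorem proposition3p1
  (G M omega Re : R) (x y z vx vy vz : R -> R) (E : R)
  (v0x v0y v0z v1x v1y v1z : R) :
  0 < G -> 0 < M ->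
  (* the (unperturbed) Newtonian trajectory, never hitting the centre *)
  (forall t, 0 < norm3 (x t) (y t) (z t)) ->
  (forall t, is_derive x t (vx t)) ->
  (forall t, is_derive y t (vy t)) ->
  (forall t, is_derive z t (vz t)) ->
  (forall t, is_derive vx t (- G * M * x t / norm3 (x t) (y t) (z t) ^ 3)) ->
  (forall t, is_derive vy t (- G * M * y t / norm3 (x t) (y t) (z t) ^ 3)) ->
  (forall t, is_derive vz t (- G * M * z t / norm3 (x t) (y t) (z t) ^ 3)) ->
  (* energy per unit mass (conserved along the trajectory); hyperbolic flyby *)
  E = / 2 * (vx 0 ^ 2 + vy 0 ^ 2 + vz 0 ^ 2) - G * M / norm3 (x 0) (y 0) (z 0) ->
  0 < E ->
  (* incoming asymptotic velocity (t -> -oo) and outgoing one (t -> +oo) *)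
  is_lim vx m_infty v0x -> is_lim vy m_infty v0y -> is_lim vz m_infty v0z ->
  is_lim vx p_infty v1x -> is_lim vy p_infty v1y -> is_lim vz p_infty v1z ->
  exists dE : R,
    is_RInt_gen
      (fun t => flyby_force_dot_v G M omega Re (x t) (y t) (z t) (vx t) (vy t) (vz t))
      (Rbar_locally m_infty) (Rbar_locally p_infty) dE
    /\ dE / (2 * E)
       = 2 * omega * Re * (cos (declination v0x v0y v0z) - cos (declination v1x v1y v1z)).
Proof.
  intros HG HM Hr Hx Hy Hz Hvx Hvy Hvz HE HEpos L0x L0y L0z L1x L1y L1z.
  assert (orbit : kepler_orbit (G * M) x y z vx vy vz).
  { constructor; auto; intro t; rewrite Ropp_mult_distr_l; auto. }
  assert (HE0 : E = (vx 0 ^ 2 + vy 0 ^ 2 + vz 0 ^ 2) / 2 - G * M / norm3 (x 0) (y 0) (z 0))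
    by (rewrite HE; unfold Rdiv; ring).
  exists (- (2 * omega * Re) * (2 * E)
          * (cos (declination v1x v1y v1z) - cos (declination v0x v0y v0z))).
  split.
  - rewrite HE0 in HEpos |- *.
    exact (is_RInt_gen_force G M omega Re x y z vx vy vz orbit ltac:(nra) HEpos
             v0x v0y v0z v1x v1y v1z L0x L0y L0z L1x L1y L1z).
  - field; lra.
Qed.
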